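(* Let $\mathcal{S}$ be a state space, $\mathcal{A}$ a finite action space, $\rho$ a distribution on $\mathcal{S}$, $\pi_{\mathrm{ref}}$ a policy, $R>0$, and $r^*:\mathcal{S}\times\mathcal{A}\to[0,R]$. Let $\pi$ be any policy, $r:\mathcal{S}\times\mathcal{A}\to[-R,R]$ any reward function, and $\tilde\pi$ any policy with $\tilde\pi(a|s)>0$ for all $(s,a)$. Then $$\mathbb{E}_{s\sim\rho,a\sim\pi(\cdot|s),\tilde a\sim\pi_{\mathrm{ref}}(\cdot|s)}\Big[\big|\big(r^*(s,a)-r^*(s,\tilde a)\big)-\big(r(s,a)-r(s,\tilde a)\big)\big|\Big]\le8\sqrt2\,e^{2R}\sqrt{\mathrm{Cov}^{\pi|\tilde\pi}\cdot\mathbb{E}_{s\sim\rho,a\sim\tilde\pi(\cdot|s),\tilde a\sim\pi_{\mathrm{ref}}(\cdot|s)}\big[\mathbb{H}^2\big(\mathbb{P}_r(\cdot|s,a,\tilde a)\|\mathbb{P}_{r^*}(\cdot|s,a,\tilde a)\big)\big]}.$$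
   Context: Bradley–Terry model: $\mathbb{P}_r(y=1|s,a,\tilde a)=\sigma(r(s,a)-r(s,\tilde a))$, $\mathbb{P}_r(y=0|s,a,\tilde a)=1-\sigma(r(s,a)-r(s,\tilde a))$, $\sigma(x)=1/(1+e^{-x})$. $\mathrm{Cov}^{\pi|\tilde\pi}:=\mathbb{E}_{s\sim\rho,a\sim\pi(\cdot|s)}[\pi(a|s)/\tilde\pi(a|s)]$. Squared Hellinger distance between distributions on $\{0,1\}$: $\mathbb{H}^2(P\|Q)=\sum_{y\in\{0,1\}}(\sqrt{P(y)}-\sqrt{Q(y)})^2$. *)

From HB Require Import structures.
From mathcomp Require Import all_boot all_order all_algebra.
From mathcomp Require Import all_classical all_reals all_analysis.
Set Implicit Arguments. Unset Strict Implicit. Unset Printing Implicit Defensive.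
Import Order.TTheory GRing.Theory Num.Theory.
Local Open Scope ring_scope.

(* A policy is a Markov kernel
   S -> distributions on A, represented by its probability mass function
   pi s a = pi(a|s), measurable in s for each action a. *)

Definition is_policy (d : measure_display) (S : measurableType d)
  (A : finType) (R : realType) (pi : S -> A -> R) : Prop :=
  [/\ (forall s a, 0 <= pi s a),
      (forall s, \sum_(a : A) pi s a = 1) &
      (forall a, measurable_fun setT (fun s => pi s a))].

Definition sigmoid (R : realType) (x : R) : R := 1 / (1 + expR (- x)).

(* Bradley--Terry model: P_r(y | s, a, a'), with y = true standing for y = 1 *)
Definition PBT (S A : Type) (R : realType) (r : S -> A -> R)
  (s : S) (a a' : A) (y : bool) : R :=
  if y then sigmoid (r s a - r s a') else 1 - sigmoid (r s a - r s a').

Definition hellinger2 (R : realType) (P Q : bool -> R) : R :=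
  \sum_(y : bool) (Num.sqrt (P y) - Num.sqrt (Q y)) ^+ 2.

Definition Cov (d : measure_display) (S : measurableType d) (A : finType)
  (R : realType) (rho : probability S R) (pi pi' : S -> A -> R) : \bar R :=
  (\int[rho]_s (\sum_(a : A) pi s a * (pi s a / pi' s a))%:E)%E.

From HB Require Import structures.
From mathcomp Require Import all_boot all_order all_algebra.
From mathcomp Require Import all_classical all_reals all_analysis.
From mathcomp Require Import measurable_realfun.
From mathcomp Require Import ring lra.
Set Implicit Arguments. Unset Strict Implicit. Unset Printing Implicit Defensive.
Import Order.TTheory GRing.Theory Num.Theory.
Local Open Scope ring_scope.

(* For rewards bounded by R the Bradley-Terry link sigma is bi-Lipschitz on
   the relevant range, with inverse constant 4 e^(2R), and for Bernoulli laws
   (p - q)^2 <= 2 H^2; so every squared reward gap D(s,a,a') is at most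
   C^2 H^2(s,a,a') with C = 4 sqrt 2 e^(2R).  Splitting
   pi pi_ref |D| = (pi / sqrt pit) (sqrt pit pi_ref |D|) by AM-GM with a free
   parameter t > 0 bounds the integrand by C/2 (t g + h / t), where g and h
   are the integrands of Cov and of the Hellinger term; integrating and
   optimising in t gives C sqrt(Cov * E[H^2]), and C is half the stated
   constant. *)

Section Sigmoid.
Variable R : realType.
Implicit Types x y M : R.

Lemma sigmoid_ge0 x : 0 <= sigmoid x.
Proof. by rewrite /sigmoid divr_ge0 // addr_ge0 // expR_ge0. Qed.

Lemma sigmoid_le1 x : sigmoid x <= 1.
Proof.
by rewrite /sigmoid ler_pdivrMr ?mul1r ?lerDl ?expR_ge0 // ltr_pwDr ?expR_gt0.
Qed.

Lemma subr_le_sigmoidB x y :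
  x - y <= (sigmoid x - sigmoid y) * (2 + expR x + expR (- y)).
Proof.
have u0 : 0 < expR (- x) := expR_gt0 _.
have v0 : 0 < expR (- y) := expR_gt0 _.
have ex : expR x = (expR (- x))^-1 by rewrite expRN invrK.
rewrite ex /sigmoid; set u := expR (- x) in u0 *; set v := expR (- y) in v0 *.
have u1 : 1 + u != 0 by rewrite gt_eqF //; lra.
have v1 : 1 + v != 0 by rewrite gt_eqF //; lra.
(* [e^(x - y) = v / u = (1 + a) (1 + b)] with [a + b] the right-hand side,
   and [1 + z <= e^z]. *)
pose a := (v - u) / (1 + u); pose b := (v - u) / (u * (1 + v)).
have ab_sum : a + b = (1 / (1 + u) - 1 / (1 + v)) * (2 + u^-1 + v).
  by rewrite /a /b; field; rewrite u1 v1 gt_eqF.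
rewrite -ab_sum -ler_expR [expR (a + b)]expRD.
have -> : expR (x - y) = (1 + a) * (1 + b).
  rewrite expRD ex -/u -/v /a /b; field.
  by rewrite u1 v1 gt_eqF.
apply: ler_pM; rewrite ?expR_ge1Dx //.
- have -> : 1 + a = (1 + v) / (1 + u) by rewrite /a; field.
  by apply: divr_ge0; lra.
- have -> : 1 + b = v * (1 + u) / (u * (1 + v)).
    by rewrite /b; field; rewrite v1 gt_eqF.
  by apply: divr_ge0; apply: mulr_ge0; lra.
Qed.

Lemma sigmoid_nondecreasing : nondecreasing_fun (@sigmoid R).
Proof.
move=> y x yx; rewrite -subr_ge0.
have M0 : 0 < 2 + expR x + expR (- y) by rewrite !addr_gt0 ?expR_gt0.
rewrite -(pmulr_lge0 _ M0); apply: le_trans (subr_le_sigmoidB x y).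
by rewrite subr_ge0.
Qed.

Lemma measurable_sigmoid : measurable_fun setT (@sigmoid R).
Proof. exact: nondecreasing_measurable sigmoid_nondecreasing. Qed.

Lemma dist_le_sigmoid_dist M x y : `|x| <= M -> `|y| <= M ->
  `|x - y| <= 4 * expR M * `|sigmoid x - sigmoid y|.
Proof.
wlog yx : x y / y <= x => [wlog_yx xM yM|].
  have [/wlog_yx|/ltW/wlog_yx] := leP y x; first exact.
  by rewrite distrC [`|sigmoid _ - _|]distrC; exact.
move=> /ler_normlP[xM' xM] /ler_normlP[yM' yM].
rewrite !ger0_norm ?subr_ge0 ?sigmoid_nondecreasing //.
apply: le_trans (subr_le_sigmoidB x y) _.
rewrite mulrC ler_wpM2r ?subr_ge0 ?sigmoid_nondecreasing //.
have : expR x <= expR M by rewrite ler_expR.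
have : expR (- y) <= expR M by rewrite ler_expR; lra.
have := expR_ge1Dx M; lra.
Qed.
End Sigmoid.

Definition bern {R : realType} (p : R) (y : bool) : R := if y then p else 1 - p.

Section Hellinger.
Variable R : realType.
Implicit Types p q : R.

Lemma hellinger2_ge0 (P Q : bool -> R) : 0 <= hellinger2 P Q.
Proof. by apply: sumr_ge0 => y _; exact: sqr_ge0. Qed.

Lemma sqrB_le_sqrtB p q : 0 <= p <= 1 -> 0 <= q <= 1 ->
  (p - q) ^+ 2 <= 4 * (Num.sqrt p - Num.sqrt q) ^+ 2.
Proof.
move=> /andP[p0 p1] /andP[q0 q1].
have sp := sqrtr_ge0 p; have sq := sqrtr_ge0 q.
have sp2 : Num.sqrt p ^+ 2 = p by rewrite sqr_sqrtr.
have sq2 : Num.sqrt q ^+ 2 = q by rewrite sqr_sqrtr.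
have -> : (p - q) ^+ 2 =
    (Num.sqrt p + Num.sqrt q) ^+ 2 * (Num.sqrt p - Num.sqrt q) ^+ 2.
  by rewrite -{1}sp2 -{1}sq2; ring.
rewrite ler_wpM2r ?sqr_ge0 //.
have : 0 <= (Num.sqrt p - Num.sqrt q) ^+ 2 := sqr_ge0 _.
have : (Num.sqrt p + Num.sqrt q) ^+ 2 + (Num.sqrt p - Num.sqrt q) ^+ 2 = 2 * (p + q).
  by rewrite -[in RHS]sp2 -[in RHS]sq2; ring.
lra.
Qed.

Lemma sqrB_le_hellinger2_bern p q : 0 <= p <= 1 -> 0 <= q <= 1 ->
  (p - q) ^+ 2 <= 2 * hellinger2 (bern p) (bern q).
Proof.
move=> p01 q01; rewrite /hellinger2 big_bool /=.
have p01' : 0 <= 1 - p <= 1 by move: p01 => /andP[] *; apply/andP; split; lra.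
have q01' : 0 <= 1 - q <= 1 by move: q01 => /andP[] *; apply/andP; split; lra.
have := sqrB_le_sqrtB p01 q01; have := sqrB_le_sqrtB p01' q01'.
have -> : (1 - p) - (1 - q) = - (p - q) by ring.
rewrite sqrrN; lra.
Qed.

Lemma measurable_hellinger2_bern d (S : measurableType d) (p q : S -> R) :
  measurable_fun setT p -> measurable_fun setT q ->
  measurable_fun setT (fun s => hellinger2 (bern (p s)) (bern (q s))).
Proof.
move=> mp mq; rewrite /hellinger2.
have msqrt : measurable_fun setT (@Num.sqrt R).
  by apply: continuous_measurable_fun; exact: sqrt_continuous.
apply: measurable_sum => -[]; apply: measurable_funX; apply: measurable_funB;
  apply: measurableT_comp msqrt _ => //=; exact: measurable_funB.
Qed.
End Hellinger.

Lemma sqr_le_hellinger2_sigmoid (R : realType) (M x y : R) :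
  `|x| <= M -> `|y| <= M ->
  (y - x) ^+ 2 <= (4 * Num.sqrt 2 * expR M) ^+ 2 *
    hellinger2 (bern (sigmoid x)) (bern (sigmoid y)).
Proof.
move=> xM yM; rewrite -sqrrN opprB.
have sigmoid01 (z : R) : 0 <= sigmoid z <= 1 by rewrite sigmoid_ge0 sigmoid_le1.
have := sqrB_le_hellinger2_bern (sigmoid01 x) (sigmoid01 y).
have le_xy : `|x - y| ^+ 2 <= (4 * expR M * `|sigmoid x - sigmoid y|) ^+ 2.
  by rewrite !expr2 ler_pM ?dist_le_sigmoid_dist.
rewrite exprMn !real_normK ?num_real // in le_xy => le_sig.
apply: le_trans le_xy _.
have -> : forall H, (4 * Num.sqrt 2 * expR M) ^+ 2 * H = (4 * expR M) ^+ 2 * (2 * H).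
  by move=> H; rewrite !exprMn sqr_sqrtr //; ring.
by rewrite ler_wpM2l ?sqr_ge0.
Qed.

Lemma sqr_reward_gap_le_hellinger2 (R : realType) (Rb x x' y y' : R) :
  - Rb <= x <= Rb -> - Rb <= x' <= Rb -> - Rb <= y <= Rb -> - Rb <= y' <= Rb ->
  ((y - y') - (x - x')) ^+ 2 <= (8 * Num.sqrt 2 * expR (2 * Rb)) ^+ 2 *
    hellinger2 (bern (sigmoid (x - x'))) (bern (sigmoid (y - y'))).
Proof.
have gapB u u' : - Rb <= u <= Rb -> - Rb <= u' <= Rb -> `|u - u'| <= 2 * Rb.
  by move=> /andP[? ?] /andP[? ?]; apply/ler_normlP; split; lra.
move=> xB x'B yB y'B.
apply: le_trans (sqr_le_hellinger2_sigmoid (gapB _ _ xB x'B) (gapB _ _ yB y'B)) _.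
rewrite ler_wpM2r ?hellinger2_ge0 // ler_pXn2r ?nnegrE ?mulr_ge0 ?sqrtr_ge0 ?expR_ge0 //.
by rewrite -!mulrA ler_pM2r ?mulr_gt0 ?sqrtr_gt0 ?expR_gt0 //; lra.
Qed.

Section AmGm.
Variable R : realType.

Lemma mul_abs_le_amgm (K t p w D H : R) :
  0 < K -> 0 < t -> 0 <= p -> 0 < w -> D ^+ 2 <= K ^+ 2 * H ->
  p * `|D| <= K / 2 * (t * (p * (p / w)) + w * H / t).
Proof.
move=> K0 t0 p0 w0 DH.
pose c := t * K / w.
have c0 : 0 < c by rewrite /c divr_gt0 ?mulr_gt0.
have amgm : 2 * (p * `|D|) <= c * p ^+ 2 + `|D| ^+ 2 / c.
  rewrite -subr_ge0.
  have -> : c * p ^+ 2 + `|D| ^+ 2 / c - 2 * (p * `|D|) = (c * p - `|D|) ^+ 2 / c.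
    by field; rewrite gt_eqF.
  by rewrite divr_ge0 ?sqr_ge0 ?ltW.
have DHc : `|D| ^+ 2 / c <= K ^+ 2 * H / c.
  by rewrite ler_pM2r ?invr_gt0 // real_normK ?num_real.
have -> : K / 2 * (t * (p * (p / w)) + w * H / t) = (c * p ^+ 2 + K ^+ 2 * H / c) / 2.
  by rewrite /c; field; rewrite !gt_eqF.
lra.
Qed.

Lemma sum_abs_le_amgm (A : finType) (p q w : A -> R) (D H : A -> A -> R) (K t : R) :
  0 < K -> 0 < t -> (forall a, 0 <= p a) -> (forall a, 0 <= q a) ->
  \sum_a q a = 1 -> (forall a, 0 < w a) ->
  (forall a a', D a a' ^+ 2 <= K ^+ 2 * H a a') ->
  \sum_a \sum_a' p a * q a' * `|D a a'| <=
  K / 2 * (t * \sum_a p a * (p a / w a) +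
           (\sum_a \sum_a' w a * q a' * H a a') / t).
Proof.
move=> K0 t0 p0 q0 q1 w0 DH.
have -> : \sum_a p a * (p a / w a) = \sum_a \sum_a' q a' * (p a * (p a / w a)).
  by apply: eq_bigr => a _; rewrite -mulr_suml q1 mul1r.
rewrite mulr_suml !mulr_sumr -big_split /= mulr_sumr; apply: ler_sum => a _.
rewrite mulr_suml !mulr_sumr -big_split /= mulr_sumr; apply: ler_sum => a' _.
rewrite [leRHS](_ : _ =
  q a' * (K / 2 * (t * (p a * (p a / w a)) + w a * H a a' / t))); last by ring.
by rewrite mulrAC mulrC ler_wpM2l ?mul_abs_le_amgm.
Qed.
End AmGm.

Section Optimisation.
Variable R : realType.

Lemma le_mul_sqrt_of_amgm (K F G H : R) : 0 < K -> 0 <= G -> 0 <= H ->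
  (forall t, 0 < t -> F <= K / 2 * (t * G + H / t)) ->
  F <= K * Num.sqrt (G * H).
Proof.
move=> K0 G0 H0 amgm.
have [F_le0|F0] := leP F 0.
  by apply: le_trans F_le0 _; rewrite mulr_ge0 ?sqrtr_ge0 ?ltW.
apply: le_trans (_ : F <= Num.sqrt (K ^+ 2 * (G * H))) _; last first.
  by rewrite sqrtrM ?sqr_ge0 // sqrtr_sqr gtr0_norm.
have K2GH0 : 0 <= K ^+ 2 * (G * H) by rewrite mulr_ge0 ?sqr_ge0 ?mulr_ge0.
rewrite -[leLHS]gtr0_norm // -sqrtr_sqr ler_sqrt //.
have [G_gt0|G_le0] := ltP 0 G; last first.
  have G_eq0 : G = 0 by apply/eqP; rewrite eq_le G_le0.
  rewrite {}G_eq0 {G_le0 G0} in amgm *.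
  (* For [G = 0] the bound [K H / (2 t)] drops below [F] once [t] is large. *)
  have t0 : 0 < K * (H + 1) / F by rewrite divr_gt0 ?mulr_gt0 //; lra.
  have := amgm _ t0.
  have -> : K / 2 * (K * (H + 1) / F * 0 + H / (K * (H + 1) / F)) =
            F * H / (2 * (H + 1)).
    by field; rewrite !gt_eqF //; lra.
  rewrite ler_pdivlMr; last lra.
  have := mulr_ge0 (ltW F0) H0.
  by rewrite mul0r mulr0; nra.
have t0 : 0 < F / (K * G) by rewrite divr_gt0 ?mulr_gt0.
have := amgm _ t0.
have -> : K / 2 * (F / (K * G) * G + H / (F / (K * G))) =
          F / 2 + K ^+ 2 * G * H / F / 2.
  by field; rewrite !gt_eqF.
move=> le_F; have : F <= K ^+ 2 * G * H / F by lra.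
by rewrite ler_pdivlMr // -expr2 !mulrA.
Qed.

Local Open Scope ereal_scope.

Lemma le_mul_sqrte_of_amgm (K : R) (F G H : \bar R) :
  (0 < K)%R -> 0 < G -> 0 < H ->
  (forall t, (0 < t)%R -> F <= (K / 2 * t)%:E * G + (K / 2 / t)%:E * H) ->
  F <= K%:E * sqrte (G * H).
Proof.
move=> K0 + + amgm; case: G amgm => [G| |] + //; case: H => [H| |] amgm //=.
- rewrite !lte_fin => G0 H0.
  case: F amgm => [F| |] amgm; last by rewrite leNye.
    rewrite -EFinM lee_fin; apply: le_mul_sqrt_of_amgm => //; try exact: ltW.
    move=> t t0.
    have -> : (K / 2 * (t * G + H / t) = K / 2 * t * G + K / 2 / t * H)%R by ring.
    by rewrite -lee_fin EFinD !EFinM amgm.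
  by have := amgm 1%R ltr01; rewrite -!EFinM -EFinD leye_eq.
- by move=> G0 _; rewrite gt0_muley //= gt0_muley ?leey ?lte_fin.
- by move=> _ H0; rewrite gt0_mulye //= gt0_muley ?leey ?lte_fin.
- by move=> _ _; rewrite gt0_muley ?leey ?lte_fin.
Qed.
End Optimisation.

Section IntegralAmGm.
Context d (S : measurableType d) (R : realType) (mu : {measure set S -> \bar R}).
Variables (f g h : S -> R) (K : R).
Hypotheses (K0 : 0 < K) (mf : measurable_fun setT f) (mg : measurable_fun setT g)
  (mh : measurable_fun setT h) (f0 : forall s, 0 <= f s) (g0 : forall s, 0 <= g s)
  (h0 : forall s, 0 <= h s)
  (amgm : forall s t, 0 < t -> f s <= K / 2 * (t * g s + h s / t)).
Local Open Scope ereal_scope.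

Let integral_EFin_ge0 (u : S -> R) : (forall s, (0 <= u s)%R) ->
  0 <= \int[mu]_s (u s)%:E.
Proof. by move=> u0; apply: integral_ge0 => s _; rewrite lee_fin. Qed.

Let integral_le0_of_vanishing (u : S -> R) : measurable_fun setT u ->
  (forall s, (0 <= u s)%R) -> (forall s, u s = 0%R -> (f s <= 0)%R) ->
  \int[mu]_s (u s)%:E = 0 -> \int[mu]_s (f s)%:E <= 0.
Proof.
move=> m_u u0 uf Iu0.
have u_ae0 : ae_eq mu setT (fun s => (u s)%:E) (cst 0).
  apply/(ae_eq_integral_abs mu measurableT _).1; first exact/measurable_EFinP.
  by rewrite -Iu0; apply: eq_integral => s _; rewrite gee0_abs ?lee_fin.
rewrite -(integral0 mu setT); apply: ae_ge0_le_integral => //.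
- by move=> s _; rewrite lee_fin.
- exact/measurable_EFinP.
- apply: filterS u_ae0 => s /= us0 _.
  by rewrite lee_fin uf //; case: (us0 I).
Qed.

Let integral_le_amgm t : (0 < t)%R ->
  \int[mu]_s (f s)%:E <= (K / 2 * t)%:E * \int[mu]_s (g s)%:E +
                          (K / 2 / t)%:E * \int[mu]_s (h s)%:E.
Proof.
move=> t0.
have c1 : (0 <= K / 2 * t)%R by rewrite mulr_ge0 ?divr_ge0 ?ltW.
have c2 : (0 <= K / 2 / t)%R by rewrite !divr_ge0 ?ltW.
have mgE : measurable_fun setT (fun s => (g s)%:E) by exact/measurable_EFinP.
have mhE : measurable_fun setT (fun s => (h s)%:E) by exact/measurable_EFinP.
have gZ0 s : 0 <= (K / 2 * t)%:E * (g s)%:E by rewrite -EFinM lee_fin mulr_ge0.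
have hZ0 s : 0 <= (K / 2 / t)%:E * (h s)%:E by rewrite -EFinM lee_fin mulr_ge0.
rewrite -!ge0_integralZl_EFin // -?ge0_integralD //;
  try by [move=> s _; rewrite lee_fin | exact: emeasurable_funM].
apply: ge0_le_integral => //.
- by move=> s _; rewrite lee_fin.
- exact/measurable_EFinP.
- by apply: emeasurable_funD; apply: emeasurable_funM.
move=> s _; rewrite -!EFinM -EFinD lee_fin.
by rewrite [leRHS](_ : _ = K / 2 * (t * g s + h s / t))%R ?amgm //; ring.
Qed.

Lemma integral_le_mul_sqrte_of_amgm :
  \int[mu]_s (f s)%:E <=
  K%:E * sqrte (\int[mu]_s (g s)%:E * \int[mu]_s (h s)%:E).
Proof.
have ptw s : (f s <= K * Num.sqrt (g s * h s))%R.
  by apply: le_mul_sqrt_of_amgm => // t; exact: amgm.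
have RHS0 : 0 <= K%:E * sqrte (\int[mu]_s (g s)%:E * \int[mu]_s (h s)%:E).
  by rewrite mule_ge0 ?sqrte_ge0 ?lee_fin ?ltW.
(* As [0 * +oo = 0], a vanishing integral kills the right-hand side even when
   the other one is infinite; then [f = 0] almost everywhere. *)
have [G0|G_neq0] := eqVneq (\int[mu]_s (g s)%:E) 0.
  apply: le_trans (integral_le0_of_vanishing mg g0 _ G0) RHS0 => s gs0.
  by have := ptw s; rewrite gs0 mul0r sqrtr0 mulr0.
have [H0|H_neq0] := eqVneq (\int[mu]_s (h s)%:E) 0.
  apply: le_trans (integral_le0_of_vanishing mh h0 _ H0) RHS0 => s hs0.
  by have := ptw s; rewrite hs0 mulr0 sqrtr0 mulr0.
apply: le_mul_sqrte_of_amgm integral_le_amgm => //.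
- by rewrite lt0e G_neq0 integral_EFin_ge0.
- by rewrite lt0e H_neq0 integral_EFin_ge0.
Qed.
End IntegralAmGm.

Lemma measurable_funV_gt0 d (S : measurableType d) (R : realType) (u : S -> R) :
  measurable_fun setT u -> (forall s, 0 < u s) ->
  measurable_fun setT (fun s => (u s)^-1).
Proof.
move=> mu u0; rewrite (_ : (fun s => _) = fun s => expR (- ln (u s))).
  by apply: measurableT_comp; [exact: measurable_expR|]; apply: measurable_funN;
    apply: measurableT_comp mu; exact: measurable_ln.
by apply/funext => s; rewrite expRN lnK // posrE.
Qed.

Lemma measurable_sum_pair d (S : measurableType d) (R : realType) (A : finType)
    (p q : S -> A -> R) (F : S -> A -> A -> R) :
  (forall a, measurable_fun setT (fun s => p s a)) ->
  (forall a, measurable_fun setT (fun s => q s a)) ->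
  (forall a a', measurable_fun setT (fun s => F s a a')) ->
  measurable_fun setT (fun s => \sum_a \sum_a' p s a * q s a' * F s a a').
Proof.
move=> mp mq mF; apply: measurable_sum => a; apply: measurable_sum => a'.
by apply: measurable_funM => //; exact: measurable_funM.
Qed.

Lemma PBT_bern (S A : Type) (R : realType) (r : S -> A -> R) s a a' :
  PBT r s a a' = bern (sigmoid (r s a - r s a')).
Proof. by []. Qed.

Theorem lemmaH3 (R : realType) (d : measure_display) (S : measurableType d)
  (A : finType) (rho : probability S R) (piref : S -> A -> R) (Rb : R)
  (rstar : S -> A -> R) (pi : S -> A -> R) (r : S -> A -> R)
  (pit : S -> A -> R) :
  is_policy piref -> 0 < Rb ->
  (forall s a, 0 <= rstar s a <= Rb) ->
  (forall a, measurable_fun setT (fun s => rstar s a)) ->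
  is_policy pi ->
  (forall s a, - Rb <= r s a <= Rb) ->
  (forall a, measurable_fun setT (fun s => r s a)) ->
  is_policy pit -> (forall s a, 0 < pit s a) ->
  (\int[rho]_s (\sum_(a : A) \sum_(a' : A) pi s a * piref s a' *
      `| (rstar s a - rstar s a') - (r s a - r s a') |)%:E
   <= (8 * Num.sqrt 2 * expR (2 * Rb))%:E *
      sqrte (Cov rho pi pit *
        \int[rho]_s (\sum_(a : A) \sum_(a' : A) pit s a * piref s a' *
          hellinger2 (PBT r s a a') (PBT rstar s a a'))%:E))%E.
Proof.
move=> [ref0 ref1 mref] Rb0 rstarB mrstar [pi0 _ mpi] rB mr [pit0 _ mpit] pit_gt0.
set K := 8 * Num.sqrt 2 * expR (2 * Rb).
have K0 : 0 < K by rewrite !mulr_gt0 ?sqrtr_gt0 ?expR_gt0.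
have rstarB' s a : - Rb <= rstar s a <= Rb.
  by have /andP[? ?] := rstarB s a; apply/andP; split; lra.
have gap_le_hellinger s a a' :
    ((rstar s a - rstar s a') - (r s a - r s a')) ^+ 2 <=
    K ^+ 2 * hellinger2 (PBT r s a a') (PBT rstar s a a').
  exact: sqr_reward_gap_le_hellinger2.
rewrite /Cov; apply: integral_le_mul_sqrte_of_amgm => //.
- apply: measurable_sum_pair => // a a'; apply: measurableT_comp => //.
  by apply: measurable_funB; exact: measurable_funB.
- apply: measurable_sum => a; apply: measurable_funM => //.
  by apply: measurable_funM => //; exact: measurable_funV_gt0.
- apply: measurable_sum_pair => // a a'; under eq_fun do rewrite !PBT_bern.
  by apply: measurable_hellinger2_bern;
    (apply: measurableT_comp; [exact: measurable_sigmoid | exact: measurable_funB]).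
- by move=> s; do 2 (apply: sumr_ge0 => ? _); rewrite !mulr_ge0 ?pi0 ?ref0.
- by move=> s; apply: sumr_ge0 => a _; rewrite !mulr_ge0 ?invr_ge0 ?pi0 ?ltW ?pit_gt0.
- by move=> s; do 2 (apply: sumr_ge0 => ? _); rewrite !mulr_ge0 ?hellinger2_ge0 ?pit0 ?ref0.
- move=> s t t0.
  exact: sum_abs_le_amgm K0 t0 (pi0 s) (ref0 s) (ref1 s) (pit_gt0 s) (gap_le_hellinger s).
Qed.
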